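(* Let $f=a_0+a_1x+\cdots+a_nx^n\in\mathbb{Z}[x]$ be a primitive polynomial. Suppose that $a_0=\pm p^k d$ for some positive integers $k$ and $d$ and a prime number $p$ with $p\nmid a_1 d$, and that every zero $\theta\in\mathbb{C}$ of $f$ satisfies $|\theta|>d$. Then $f$ is irreducible in $\mathbb{Z}[x]$.
   Context: A polynomial $a_0+a_1x+\cdots+a_nx^n\in\mathbb{Z}[x]$ is primitive if $\gcd(a_0,a_1,\ldots,a_n)=1$. *)

From HB Require Import structures.
From mathcomp Require Import all_boot all_order all_algebra all_field.
Set Implicit Arguments. Unset Strict Implicit. Unset Printing Implicit Defensive.
Import Order.TTheory GRing.Theory Num.Theory.
Local Open Scope ring_scope.

Definition primitive_zpoly (f : {poly int}) : bool :=
  (\big[gcdn/0%N]_(i < size f) absz f`_i == 1%N).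

Definition irreducible_in_Zx (f : {poly int}) : Prop :=
  f != 0 /\ f \isn't a GRing.unit /\
  forall g h : {poly int}, f = g * h -> g \is a GRing.unit \/ h \is a GRing.unit.

From HB Require Import structures.
From mathcomp Require Import all_boot all_order all_algebra all_field.
Import Order.TTheory GRing.Theory Num.Theory.
Local Open Scope ring_scope.

(* Suppose f = g h with neither factor a unit.  Since a_1 = g_0 h_1 + g_1 h_0
   and p does not divide a_1, p misses one of g_0, h_0, say h_0; as
   g_0 h_0 = a_0 = +-p^k d, Gauss's lemma gives |h_0| | d.  By primitivity h is
   not constant, and |h_0| = |lead_coef h| * prod |theta| over the complex
   roots theta of h, which are roots of f, so |h_0| > d: a contradiction. *)

Lemma unitzE (x : int) : (x \is a GRing.unit) = (absz x == 1%N).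
Proof. by case: x => [[|[|n]]|[|n]]. Qed.

Lemma coef1M (R : nzSemiRingType) (g h : {poly R}) :
  (g * h)`_1 = g`_0 * h`_1 + g`_1 * h`_0.
Proof. by rewrite coefM !big_ord_recl big_ord0 addr0. Qed.

Lemma prodr_gt (R : numDomainType) (r : R) (s : seq R) :
  1 <= r -> s != [::] -> (forall x, x \in s -> r < x) -> r < \prod_(x <- s) x.
Proof.
case: s => [//|x s] r_ge1 _ lt_r; rewrite big_cons.
have x_gt_r : r < x := lt_r x (mem_head x s).
have prod_ge1 : 1 <= \prod_(y <- s) y.
  rewrite big_seq; apply: (big_ind (fun y : R => 1 <= y)) => //.
    by move=> ? ?; apply: mulr_ege1.
  by move=> y ys; rewrite (le_trans r_ge1) // ltW // lt_r // in_cons ys orbT.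
apply: (lt_le_trans x_gt_r); rewrite ler_peMr //.
by rewrite (le_trans _ (ltW x_gt_r)) // (le_trans ler01 r_ge1).
Qed.

Lemma norm_coef0_gt_root_bound (C : numClosedFieldType) (q : {poly C}) (r : C) :
  1 <= r -> (1 < size q)%N -> 1 <= `|lead_coef q| ->
  (forall z, root q z -> r < `|z|) -> r < `|q`_0|.
Proof.
move=> r_ge1 size_q lc_ge1 roots_gt.
have [rs def_q] := closed_field_poly_normal q.
have lc_neq0 : lead_coef q != 0 by rewrite lead_coef_eq0 -size_poly_eq0 -lt0n ltnW.
have size_rs : size rs = (size q).-1.
  by rewrite def_q size_scale // size_prod_XsubC.
have prod_gt : r < \prod_(z <- rs) `|z|.
  rewrite -(big_map Num.norm xpredT id); apply: prodr_gt => //.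
    by rewrite -size_eq0 size_map size_rs -lt0n -ltnS prednK // ltnW.
  move=> _ /mapP[z zrs ->]; apply: roots_gt.
  by rewrite def_q rootZ // root_prod_XsubC.
rewrite -horner_coef0 def_q hornerZ horner_prod normrM normr_prod.
under eq_bigr do rewrite hornerXsubC sub0r normrN.
apply: (lt_le_trans prod_gt); rewrite mulrC ler_peMr //.
by rewrite (le_trans _ (ltW prod_gt)) // (le_trans ler01 r_ge1).
Qed.

Lemma absz_coef0_gt_root_bound (h : {poly int}) (d : nat) :
  (1 < size h)%N -> (0 < d)%N ->
  (forall z : algC, root (map_poly intr h) z -> d%:R < `|z|) ->
  (d < absz (h`_0)%R)%N.
Proof.
move=> size_h d_gt0 roots_gt.
have lc_neq0 : lead_coef h != 0 by rewrite lead_coef_eq0 -size_poly_eq0 -lt0n ltnW.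
rewrite -(ltr_nat algC) natr_absz intr_norm -(coef_map intr).
apply: norm_coef0_gt_root_bound => //; first by rewrite ler1n.
  by rewrite size_map_inj_poly //; apply: intr_inj.
rewrite lead_coef_map_inj //; last exact: intr_inj.
by rewrite -intr_norm -natr_absz ler1n absz_gt0.
Qed.

Lemma primitive_zpoly_dvd_coefs (f : {poly int}) (c : nat) :
  primitive_zpoly f -> (forall i, c %| absz (f`_i)%R)%N -> c = 1%N.
Proof.
move=> /eqP prim dvd_c; apply/eqP; rewrite -dvdn1 -prim.
by apply/dvdn_biggcdP.
Qed.

Lemma primitive_zpoly_constant_factor (f g h : {poly int}) :
  primitive_zpoly f -> f = g * h -> h != 0 -> (size h <= 1)%N ->
  h \is a GRing.unit.
Proof.
move=> prim def_f h_neq0 size_h; have def_h := size1_polyC size_h.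
rewrite poly_unitE unitzE eqn_leq size_h lt0n size_poly_eq0 h_neq0 /=.
idtac.
apply/eqP; apply: (@primitive_zpoly_dvd_coefs f) => // i.
by rewrite def_f [in g * h]def_h coefMC abszM dvdn_mull.
Qed.

Lemma coprime_factor_unit (f g h : {poly int}) (p k d : nat) :
  primitive_zpoly f -> prime p -> (0 < d)%N -> absz (f`_0)%R = (p ^ k * d)%N ->
  (forall z : algC, root (map_poly intr f) z -> d%:R < `|z|) ->
  f = g * h -> f != 0 -> ~~ (p %| absz (h`_0)%R)%N -> h \is a GRing.unit.
Proof.
move=> prim p_pr d_gt0 abs_f0 roots_gt def_f f_neq0 p_h0.
have h_neq0 : h != 0 by apply: contraNneq f_neq0 => h0; rewrite def_f h0 mulr0.
have [size_h|size_h] := leqP (size h) 1.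
  exact: primitive_zpoly_constant_factor def_f h_neq0 size_h.
have h0_dvd_d : (absz (h`_0)%R %| d)%N.
  rewrite -(@Gauss_dvdr _ (p ^ k)); last first.
    by rewrite coprimeXr // coprime_sym prime_coprime.
  by rewrite -abs_f0 def_f coef0M abszM dvdn_mull.
have : (d < absz (h`_0)%R)%N.
  apply: absz_coef0_gt_root_bound => // z hz; apply: roots_gt.
  by rewrite def_f rmorphM rootM hz orbT.
by rewrite ltnNge dvdn_leq.
Qed.

Theorem theorem22 (f : {poly int}) (p k d : nat) :
  primitive_zpoly f ->
  prime p -> (0 < k)%N -> (0 < d)%N ->
  (f`_0 = ((p ^ k * d)%N)%:Z \/ f`_0 = - ((p ^ k * d)%N)%:Z) ->
  ~~ (p %| (absz (f`_1)%R%R * d)%N)%N ->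
  (forall theta : algC, root (map_poly intr f) theta -> d%:R < `|theta|) ->
  irreducible_in_Zx f.
Proof.
move=> prim p_pr k_gt0 d_gt0 f0E p_f1d roots_gt.
have abs_f0 : absz (f`_0)%R = (p ^ k * d)%N by case: f0E => ->; rewrite ?abszN.
have f0_gt1 : (1 < absz (f`_0)%R)%N.
  rewrite abs_f0 (leq_trans _ (leq_pmulr _ d_gt0)) //.
  by rewrite -(expn0 p) ltn_exp2l // prime_gt1.
have f_neq0 : f != 0 by apply: contraTneq f0_gt1 => ->; rewrite coef0.
split=> //; split.
  by rewrite poly_unitE unitzE (gtn_eqF f0_gt1) andbF.
move=> g h def_f.
have [p_h0|p'h0] := boolP (p %| absz (h`_0)%R)%N; last first.
  by right; apply: coprime_factor_unit prim p_pr d_gt0 abs_f0 roots_gt def_f f_neq0 p'h0.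
have [p_g0|p'g0] := boolP (p %| absz (g`_0)%R)%N; last first.
  have def_f' : f = h * g by rewrite def_f mulrC.
  by left; apply: coprime_factor_unit prim p_pr d_gt0 abs_f0 roots_gt def_f' f_neq0 p'g0.
case/negP: p_f1d; apply: dvdn_mulr.
have -> : (p %| absz (f`_1)%R)%N = (p%:Z %| f`_1)%Z by [].
rewrite def_f coef1M; apply: rpredD; [exact: dvdz_mulr | exact: dvdz_mull].
Qed.
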